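(* $\mathsf{ICK}$ is sound and complete with respect to conditional frames.
   Context: Formulas are generated by $\phi ::= p\mid\bot\mid\phi\wedge\phi\mid\phi\vee\phi\mid\phi\to\phi\mid\phi\mathrel{\Box\!\!\!\rightarrow}\phi$. $\mathsf{ICK}$ is the smallest set of formulas containing intuitionistic propositional logic, $(p\mathrel{\Box\!\!\!\rightarrow}(q\wedge r))\leftrightarrow((p\mathrel{\Box\!\!\!\rightarrow} q)\wedge(p\mathrel{\Box\!\!\!\rightarrow} r))$ and $(p\mathrel{\Box\!\!\!\rightarrow}\top)\leftrightarrow\top$, closed under uniform substitution, modus ponens, and the congruence rules for both arguments of $\mathrel{\Box\!\!\!\rightarrow}$. A conditional frame is $(X,\leq,\mathcal{R})$ with $(X,\leq)$ a nonempty preorder and $\mathcal{R}=\{R_a\mid a \text{ an upset}\}$ relations on $X$ with $(\leq\circ R_a)\subseteq(R_a\circ\leq)$ for every upset $a$. Valuations assign upsets to proposition letters; intuitionistic connectives are interpreted as in Kripke semantics, and $x\models\phi\mathrel{\Box\!\!\!\rightarrow}\psi$ iff every $y$ with $xR_{V(\phi)}y$ satisfies $\psi$, where $V(\phi)$ is the truth set of $\phi$. *)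

Inductive form : Type :=
| Var  : nat -> form
| Bot  : form
| And  : form -> form -> form
| Or   : form -> form -> form
| Imp  : form -> form -> form
| Cond : form -> form -> form.

Definition Top : form := Imp Bot Bot.
Definition Iff (a b : form) : form := And (Imp a b) (Imp b a).

Fixpoint subst (s : nat -> form) (f : form) : form :=
  match f with
  | Var n => s n
  | Bot => Bot
  | And a b => And (subst s a) (subst s b)
  | Or a b => Or (subst s a) (subst s b)
  | Imp a b => Imp (subst s a) (subst s b)
  | Cond a b => Cond (subst s a) (subst s b)
  end.

Inductive ipc_axiom : form -> Prop :=
| ax_K  a b     : ipc_axiom (Imp a (Imp b a))
| ax_S  a b c   : ipc_axiom (Imp (Imp a (Imp b c)) (Imp (Imp a b) (Imp a c)))
| ax_A1 a b     : ipc_axiom (Imp (And a b) a)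
| ax_A2 a b     : ipc_axiom (Imp (And a b) b)
| ax_A3 a b     : ipc_axiom (Imp a (Imp b (And a b)))
| ax_O1 a b     : ipc_axiom (Imp a (Or a b))
| ax_O2 a b     : ipc_axiom (Imp b (Or a b))
| ax_O3 a b c   : ipc_axiom (Imp (Imp a c) (Imp (Imp b c) (Imp (Or a b) c)))
| ax_EFQ a      : ipc_axiom (Imp Bot a).

(* ICK: smallest set containing IPC, the two conditional axioms (with
   proposition letters p = 0, q = 1, r = 2), closed under uniform
   substitution, modus ponens and the congruence rules. *)
Inductive ICK : form -> Prop :=
| ICK_ipc f : ipc_axiom f -> ICK f
| ICK_CM :
    ICK (Iff (Cond (Var 0) (And (Var 1) (Var 2)))
             (And (Cond (Var 0) (Var 1)) (Cond (Var 0) (Var 2))))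
| ICK_CN : ICK (Iff (Cond (Var 0) Top) Top)
| ICK_subst s f : ICK f -> ICK (subst s f)
| ICK_mp a b : ICK (Imp a b) -> ICK a -> ICK b
| ICK_congL a b c : ICK (Iff a b) -> ICK (Iff (Cond a c) (Cond b c))
| ICK_congR a b c : ICK (Iff a b) -> ICK (Iff (Cond c a) (Cond c b)).

(* Sets are predicates; relations R_a are indexed by
   sets, required to depend only on the extension of a (sets are
   extensional), and the interaction condition is imposed for upsets a. *)
Definition upset {X : Type} (le : X -> X -> Prop) (a : X -> Prop) : Prop :=
  forall x y, le x y -> a x -> a y.

Record cframe : Type := {
  cw   : Type;
  cle  : cw -> cw -> Prop;
  cR   : (cw -> Prop) -> cw -> cw -> Prop;
  cw_inhabited : inhabited cw;
  cle_refl  : forall x, cle x x;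
  cle_trans : forall x y z, cle x y -> cle y z -> cle x z;
  cR_ext : forall a b : cw -> Prop, (forall x, a x <-> b x) ->
           forall x y, cR a x y <-> cR b x y;
  cR_comp : forall a : cw -> Prop, upset cle a ->
           forall x y z, cle x y -> cR a y z -> exists w, cR a x w /\ cle w z
}.

Fixpoint sat (F : cframe) (V : nat -> cw F -> Prop) (x : cw F) (f : form)
  : Prop :=
  match f with
  | Var n => V n x
  | Bot => False
  | And a b => sat F V x a /\ sat F V x b
  | Or a b => sat F V x a \/ sat F V x b
  | Imp a b => forall y, cle F x y -> sat F V y a -> sat F V y b
  | Cond a b => forall y, cR F (fun z => sat F V z a) x y -> sat F V y b
  end.

Definition cvalid (f : form) : Prop :=
  forall (F : cframe) (V : nat -> cw F -> Prop),
    (forall n, upset (cle F) (V n)) -> forall x, sat F V x f.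

From Stdlib Require Import Classical Cantor Lia.

(* Soundness: truth sets are upsets, so the interaction condition applies to
   them and makes truth of conditionals persistent along the preorder; the
   conditional axioms and congruence rules hold because [cR] only depends on
   the extension of its index.
   Completeness: the canonical frame consists of the prime ICK-theories.  The
   relation R_A relates s to t when A is the truth set of some formula p and t
   contains every q with p []-> q in s.  Axioms CM and CN make
   {q | p []-> q in s} deductively closed, which is what the truth lemma needs
   for conditionals, and the congruence rule makes R_A independent of the
   choice of p. *)

Section Soundness.
Variable F : cframe.

Lemma sat_upset (V : nat -> cw F -> Prop) :
  (forall n, upset (cle F) (V n)) -> forall f, upset (cle F) (fun x => sat F V x f).
Proof.
  intros HV f.
  induction f as [n| |a IHa b IHb|a IHa b IHb|a IHa b IHb|a IHa b IHb];
    simpl; intros x y Hxy Hx.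
  - exact (HV n x y Hxy Hx).
  - exact Hx.
  - destruct Hx; split; eauto.
  - destruct Hx; [left|right]; eauto.
  - intros z Hyz. apply Hx. eapply cle_trans; eauto.
  - intros z Hyz.
    destruct (cR_comp F _ IHa x y z Hxy Hyz) as [w [Hxw Hwz]].
    exact (IHb w z Hwz (Hx w Hxw)).
Qed.

Lemma sat_Cond_ext (V V' : nat -> cw F -> Prop) a a' b b' x :
  (forall y, sat F V y a <-> sat F V' y a') ->
  (forall y, sat F V y b <-> sat F V' y b') ->
  sat F V x (Cond a b) <-> sat F V' x (Cond a' b').
Proof.
  intros Ha Hb; simpl; split; intros H y Hxy; apply Hb, H; apply (cR_ext F _ _ Ha);
    exact Hxy.
Qed.

Lemma sat_subst (V : nat -> cw F -> Prop) s f x :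
  sat F V x (subst s f) <-> sat F (fun n y => sat F V y (s n)) x f.
Proof.
  revert x.
  induction f as [n| |a IHa b IHb|a IHa b IHb|a IHa b IHb|a IHa b IHb];
    intros x; simpl subst.
  - reflexivity.
  - reflexivity.
  - simpl; rewrite IHa, IHb; reflexivity.
  - simpl; rewrite IHa, IHb; reflexivity.
  - simpl; split; intros H y Hxy Hy; apply IHb, H, IHa; assumption.
  - apply sat_Cond_ext; assumption.
Qed.

Lemma sat_Iff_of_ext (V : nat -> cw F -> Prop) a b x :
  (forall y, sat F V y a <-> sat F V y b) -> sat F V x (Iff a b).
Proof. intros E; split; intros y _; apply E. Qed.

Lemma ext_of_sat_Iff (V : nat -> cw F -> Prop) a b :
  (forall x, sat F V x (Iff a b)) -> forall x, sat F V x a <-> sat F V x b.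
Proof.
  intros H x; destruct (H x) as [Hab Hba].
  split; [apply Hab|apply Hba]; apply cle_refl.
Qed.

Lemma ipc_axiom_sound (V : nat -> cw F -> Prop) :
  (forall n, upset (cle F) (V n)) -> forall f, ipc_axiom f -> forall x, sat F V x f.
Proof.
  intros HV f Hf; pose proof (sat_upset V HV) as Up.
  destruct Hf; simpl; intros x.
  - intros y _ Ha z Hyz _. exact (Up a y z Hyz Ha).
  - intros y _ Habc z Hyz Hab w Hzw Ha.
    apply (Habc w (cle_trans F _ _ _ Hyz Hzw) Ha w (cle_refl F w) (Hab w Hzw Ha)).
  - intros y _ [Ha _]; exact Ha.
  - intros y _ [_ Hb]; exact Hb.
  - intros y _ Ha z Hyz Hb. split; [exact (Up a y z Hyz Ha)|exact Hb].
  - intros y _ Ha; left; exact Ha.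
  - intros y _ Hb; right; exact Hb.
  - intros y _ Hac z Hyz Hbc w Hzw [Ha|Hb].
    + apply Hac; [eapply cle_trans; eauto|exact Ha].
    + apply Hbc; assumption.
  - intros y _ [].
Qed.

End Soundness.

Theorem ICK_sound f : ICK f -> cvalid f.
Proof.
  intros H; induction H; intros F V HV x.
  - exact (ipc_axiom_sound F V HV f H x).
  - apply sat_Iff_of_ext; simpl; firstorder.
  - apply sat_Iff_of_ext; simpl; firstorder.
  - apply sat_subst, IHICK; intros n; exact (sat_upset F V HV (s n)).
  - exact (IHICK1 F V HV x x (cle_refl F x) (IHICK2 F V HV x)).
  - apply sat_Iff_of_ext; intros y; apply sat_Cond_ext; [|reflexivity].
    exact (ext_of_sat_Iff F V a b (IHICK F V HV)).
  - apply sat_Iff_of_ext; intros y; apply sat_Cond_ext; [reflexivity|].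
    exact (ext_of_sat_Iff F V a b (IHICK F V HV)).
Qed.

Fixpoint code (f : form) : nat :=
  match f with
  | Var n => to_nat (0, n)
  | Bot => to_nat (1, 0)
  | And a b => to_nat (2, to_nat (code a, code b))
  | Or a b => to_nat (3, to_nat (code a, code b))
  | Imp a b => to_nat (4, to_nat (code a, code b))
  | Cond a b => to_nat (5, to_nat (code a, code b))
  end.

Lemma to_nat_inj p q : to_nat p = to_nat q -> p = q.
Proof.
  intros H. rewrite <- (cancel_of_to p), <- (cancel_of_to q), H. reflexivity.
Qed.

Lemma code_inj f g : code f = code g -> f = g.
Proof.
  revert g; induction f; destruct g; cbn [code]; intros H;
    apply to_nat_inj in H; try discriminate H; try reflexivity;
    apply (f_equal snd) in H; cbn [snd] in H; try (subst; reflexivity);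
    apply to_nat_inj in H;
    pose proof (f_equal fst H) as Ha; pose proof (f_equal snd H) as Hb;
    cbn [fst snd] in Ha, Hb; f_equal; auto.
Qed.

Definition extend (G : form -> Prop) (a : form) : form -> Prop :=
  fun x => G x \/ x = a.

Definition no_hyps : form -> Prop := fun _ => False.

Section Superintuitionistic.
Variable L : form -> Prop.
Hypothesis L_ipc : forall f, ipc_axiom f -> L f.
Hypothesis L_mp : forall a b, L (Imp a b) -> L a -> L b.

Inductive Der (G : form -> Prop) : form -> Prop :=
| D_ax f : L f -> Der G f
| D_hyp f : G f -> Der G f
| D_mp a b : Der G (Imp a b) -> Der G a -> Der G b.

Lemma Der_mono (G H : form -> Prop) f :
  (forall x, G x -> H x) -> Der G f -> Der H f.
Proof.
  intros GH D; induction D.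
  - apply D_ax; assumption.
  - apply D_hyp, GH; assumption.
  - eapply D_mp; eassumption.
Qed.

Lemma Der_imp_refl G a : Der G (Imp a a).
Proof.
  eapply D_mp; [eapply D_mp|].
  - apply D_ax, L_ipc, (ax_S a (Imp a a) a).
  - apply D_ax, L_ipc, ax_K.
  - apply D_ax, L_ipc, ax_K.
Qed.

Lemma Der_deduction G a b : Der (extend G a) b -> Der G (Imp a b).
Proof.
  intros D; induction D as [f Hf|f [Hf|Ha]|c d _ IHcd _ IHc].
  - eapply D_mp; [apply D_ax, L_ipc, ax_K|apply D_ax, Hf].
  - eapply D_mp; [apply D_ax, L_ipc, ax_K|apply D_hyp, Hf].
  - subst f; apply Der_imp_refl.
  - eapply D_mp; [eapply D_mp|]; [apply D_ax, L_ipc, ax_S|exact IHcd|exact IHc].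
Qed.

Lemma Der_cut G a b : Der G a -> Der (extend G a) b -> Der G b.
Proof. intros Ha Hb. eapply D_mp; [apply Der_deduction, Hb|exact Ha]. Qed.

Lemma Der_no_hyps f : Der no_hyps f -> L f.
Proof.
  intros D; induction D as [f Hf|f []|a b _ IHab _ IHa]; [exact Hf|].
  exact (L_mp a b IHab IHa).
Qed.

Record prime_theory (T : form -> Prop) : Prop := {
  pt_closed : forall f, Der T f -> T f;
  pt_prime : forall a b, T (Or a b) -> T a \/ T b;
  pt_consistent : ~ T Bot
}.

Section PrimeTheory.
Variable T : form -> Prop.
Hypothesis HT : prime_theory T.

Lemma theory_L f : L f -> T f.
Proof. intros Hf. apply (pt_closed T HT), D_ax, Hf. Qed.

Lemma theory_mp a b : T (Imp a b) -> T a -> T b.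
Proof.
  intros Hab Ha. apply (pt_closed T HT). eapply D_mp; apply D_hyp; eassumption.
Qed.

Lemma theory_L_mp a b : L (Imp a b) -> T a -> T b.
Proof. intros Hab. apply theory_mp, theory_L, Hab. Qed.

Lemma theory_And a b : T (And a b) <-> T a /\ T b.
Proof.
  split.
  - intros H; split; (eapply theory_L_mp; [apply L_ipc; constructor|exact H]).
  - intros [Ha Hb]. eapply theory_mp; [|exact Hb].
    eapply theory_L_mp; [apply L_ipc, ax_A3|exact Ha].
Qed.

Lemma theory_Or a b : T (Or a b) <-> T a \/ T b.
Proof.
  split; [apply (pt_prime T HT)|].
  intros [H|H]; (eapply theory_L_mp; [apply L_ipc; constructor|exact H]).
Qed.

End PrimeTheory.

Section Lindenbaum.
Variables (G : form -> Prop) (phi : form).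

Fixpoint stage (n : nat) : form -> Prop :=
  match n with
  | 0 => G
  | S n => fun psi => stage n psi \/
           (code psi = n /\ ~ Der (extend (stage n) psi) phi)
  end.

Definition stage_union : form -> Prop := fun psi => exists n, stage n psi.

Lemma stage_mono n m : n <= m -> forall x, stage n x -> stage m x.
Proof. induction 1; auto. intros x Hx. left; auto. Qed.

Lemma Der_stage_union f : Der stage_union f -> exists n, Der (stage n) f.
Proof.
  intros D; induction D as [f Hf|f [n Hn]|a b _ [n1 H1] _ [n2 H2]].
  - exists 0; apply D_ax, Hf.
  - exists n; apply D_hyp, Hn.
  - exists (max n1 n2). eapply D_mp.
    + eapply Der_mono; [|exact H1]. apply stage_mono; lia.
    + eapply Der_mono; [|exact H2]. apply stage_mono; lia.
Qed.

Hypothesis G_phi : ~ Der G phi.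

Lemma stage_not_Der n : ~ Der (stage n) phi.
Proof.
  induction n as [|n IHn]; [exact G_phi|]. intros D.
  destruct (classic (exists psi, code psi = n /\ ~ Der (extend (stage n) psi) phi))
    as [[psi [Hc Hpsi]]|Hno].
  - apply Hpsi. eapply Der_mono; [|exact D].
    intros x [Hx|[Hx _]]; [left; exact Hx|right]. apply code_inj; congruence.
  - apply IHn. eapply Der_mono; [|exact D].
    intros x [Hx|[Hx Hd]]; [exact Hx|]. exfalso; apply Hno; eauto.
Qed.

Lemma stage_union_not_Der : ~ Der stage_union phi.
Proof.
  intros D. destruct (Der_stage_union _ D) as [n Hn]. exact (stage_not_Der n Hn).
Qed.

Lemma stage_union_maximal psi :
  ~ stage_union psi -> Der (extend stage_union psi) phi.
Proof.
  intros Hpsi.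
  destruct (classic (Der (extend (stage (code psi)) psi) phi)) as [D|D].
  - eapply Der_mono; [|exact D].
    intros x [Hx|Hx]; [left; exists (code psi)|right]; assumption.
  - exfalso. apply Hpsi. exists (S (code psi)). right; split; [reflexivity|exact D].
Qed.

Lemma stage_union_prime : prime_theory stage_union.
Proof.
  assert (Avoid : forall a, ~ stage_union a -> Der stage_union (Imp a phi))
    by (intros a Ha; apply Der_deduction, stage_union_maximal, Ha).
  split.
  - intros f D. apply NNPP; intros Hf.
    exact (stage_union_not_Der (Der_cut _ _ _ D (stage_union_maximal f Hf))).
  - intros a b Hab. apply NNPP; intros Hn. apply stage_union_not_Der.
    eapply D_mp; [|apply D_hyp; exact Hab].
    eapply D_mp; [|apply (Avoid b); tauto].
    eapply D_mp; [|apply (Avoid a); tauto].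
    apply D_ax, L_ipc, ax_O3.
  - intros HBot. apply stage_union_not_Der.
    eapply D_mp; [apply D_ax, L_ipc, ax_EFQ|apply D_hyp, HBot].
Qed.

Lemma lindenbaum :
  exists T, prime_theory T /\ (forall x, G x -> T x) /\ ~ T phi.
Proof.
  exists stage_union. split; [exact stage_union_prime|split].
  - intros x Hx; exists 0; exact Hx.
  - intros Hphi. apply stage_union_not_Der, D_hyp, Hphi.
Qed.

End Lindenbaum.

Lemma Der_of_prime_theories G phi :
  (forall T, prime_theory T -> (forall x, G x -> T x) -> T phi) -> Der G phi.
Proof.
  intros H. apply NNPP; intros Hn.
  destruct (lindenbaum G phi Hn) as [T [HT [GT Hphi]]].
  exact (Hphi (H T HT GT)).
Qed.

End Superintuitionistic.

Lemma ICK_and_intro a b : ICK a -> ICK b -> ICK (And a b).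
Proof.
  intros Ha Hb. eapply ICK_mp; [eapply ICK_mp|]; [apply ICK_ipc, ax_A3|exact Ha|exact Hb].
Qed.

Lemma ICK_Iff_l a b : ICK (Iff a b) -> ICK (Imp a b).
Proof. intros H. eapply ICK_mp; [apply ICK_ipc, ax_A1|exact H]. Qed.

Lemma ICK_Iff_r a b : ICK (Iff a b) -> ICK (Imp b a).
Proof. intros H. eapply ICK_mp; [apply ICK_ipc, ax_A2|exact H]. Qed.

Lemma ICK_Imp_of_Der a b : Der ICK (extend no_hyps a) b -> ICK (Imp a b).
Proof. intros D. apply (Der_no_hyps ICK ICK_mp), (Der_deduction ICK ICK_ipc), D. Qed.

Lemma ICK_CM_inst a c d :
  ICK (Iff (Cond a (And c d)) (And (Cond a c) (Cond a d))).
Proof.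
  exact (ICK_subst (fun n => match n with 0 => a | 1 => c | _ => d end) _ ICK_CM).
Qed.

Lemma ICK_Cond_top a : ICK (Cond a Top).
Proof.
  pose proof (ICK_subst (fun _ => a) _ ICK_CN) as H; simpl in H.
  eapply ICK_mp; [apply (ICK_Iff_r _ _ H)|].
  apply ICK_Imp_of_Der, D_hyp; right; reflexivity.
Qed.

Lemma ICK_consistent : ~ ICK Bot.
Proof.
  intros H.
  set (F := {| cw := unit; cle := fun _ _ => True; cR := fun _ _ _ => False;
               cw_inhabited := inhabits tt;
               cle_refl := fun _ => I;
               cle_trans := fun _ _ _ _ _ => I;
               cR_ext := fun a b _ x y => conj (fun h => h) (fun h => h);
               cR_comp := fun a _ x y z _ (h : False) => match h with end |}).
  exact (ICK_sound Bot H F (fun _ _ => True) (fun _ _ _ _ _ => I) tt).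
Qed.

Section ConditionalTheory.
Variable T : form -> Prop.
Hypothesis HT : prime_theory ICK T.

Lemma theory_Cond_mono a c d : ICK (Imp c d) -> T (Cond a c) -> T (Cond a d).
Proof.
  intros Hcd Hc.
  assert (E : ICK (Iff c (And c d))).
  { apply ICK_and_intro; [|apply ICK_ipc, ax_A1].
    apply ICK_Imp_of_Der. eapply D_mp; [eapply D_mp|].
    - apply D_ax, ICK_ipc, ax_A3.
    - apply D_hyp; right; reflexivity.
    - eapply D_mp; [apply D_ax, Hcd|apply D_hyp; right; reflexivity]. }
  apply (ICK_congR _ _ a), ICK_Iff_l in E.
  apply (theory_L_mp ICK T HT _ _ E) in Hc.
  apply (theory_L_mp ICK T HT _ _ (ICK_Iff_l _ _ (ICK_CM_inst a c d))) in Hc.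
  exact (proj2 (proj1 (theory_And ICK ICK_ipc T HT _ _) Hc)).
Qed.

Lemma theory_Cond_and a c d :
  T (Cond a c) -> T (Cond a d) -> T (Cond a (And c d)).
Proof.
  intros Hc Hd. eapply (theory_L_mp ICK T HT).
  - apply ICK_Iff_r, ICK_CM_inst.
  - apply (theory_And ICK ICK_ipc T HT); split; assumption.
Qed.

Lemma cond_section_closed a b : Der ICK (fun q => T (Cond a q)) b -> T (Cond a b).
Proof.
  intros D; induction D as [f Hf|f Hf|c d _ IHcd _ IHc]; [|exact Hf|].
  - eapply theory_Cond_mono; [|apply (theory_L ICK T HT), ICK_Cond_top].
    apply ICK_Imp_of_Der, D_ax, Hf.
  - eapply theory_Cond_mono; [|exact (theory_Cond_and _ _ _ IHcd IHc)].
    apply ICK_Imp_of_Der. eapply D_mp.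
    + eapply D_mp; [apply D_ax, ICK_ipc, ax_A1|apply D_hyp; right; reflexivity].
    + eapply D_mp; [apply D_ax, ICK_ipc, ax_A2|apply D_hyp; right; reflexivity].
Qed.

End ConditionalTheory.

Record world := { wset :> form -> Prop; wprime : prime_theory ICK wset }.

Definition wle (s t : world) : Prop := forall f, s f -> t f.

Definition wR (A : world -> Prop) (s t : world) : Prop :=
  exists p, (forall u, A u <-> u p) /\ forall q, s (Cond p q) -> t q.

Lemma Der_of_worlds G b : (forall t : world, (forall x, G x -> t x) -> t b) -> Der ICK G b.
Proof.
  intros H. apply (Der_of_prime_theories ICK ICK_ipc).
  intros T HT GT. exact (H (Build_world T HT) GT).
Qed.

Lemma ICK_Imp_of_worlds a b : (forall t : world, t a -> t b) -> ICK (Imp a b).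
Proof.
  intros H. apply ICK_Imp_of_Der, Der_of_worlds.
  intros t Ht. apply H, Ht. right; reflexivity.
Qed.

Lemma world_inhabited : inhabited world.
Proof.
  apply NNPP; intros Hn. apply ICK_consistent.
  apply (Der_no_hyps ICK ICK_mp), Der_of_worlds.
  intros t _. exfalso; exact (Hn (inhabits t)).
Qed.

Lemma wR_ext (A B : world -> Prop) : (forall u, A u <-> B u) ->
  forall s t, wR A s t <-> wR B s t.
Proof.
  intros E s t; split; intros [p [Hp Hq]]; exists p; split; auto;
    intros u; rewrite <- Hp, E; reflexivity.
Qed.

Lemma wR_comp (A : world -> Prop) :
  forall s s' t, wle s s' -> wR A s' t -> exists u, wR A s u /\ wle u t.
Proof.
  intros s s' t Hss' [p [Hp Hq]]. exists t. split.
  - exists p; split; [exact Hp|]. intros q Hsq. apply Hq, Hss', Hsq.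
  - intros f Hf; exact Hf.
Qed.

Definition canonical_frame : cframe :=
  {| cw := world; cle := wle; cR := wR; cw_inhabited := world_inhabited;
     cle_refl := fun s f h => h;
     cle_trans := fun s t u h1 h2 f h => h2 f (h1 f h);
     cR_ext := wR_ext; cR_comp := fun A _ => wR_comp A |}.

Definition canonical_val (n : nat) (t : world) : Prop := t (Var n).

Lemma world_Imp (t : world) a b :
  (forall u : world, wle t u -> u a -> u b) <-> t (Imp a b).
Proof.
  split.
  - intros H. apply (pt_closed _ _ (wprime t)), (Der_deduction ICK ICK_ipc).
    apply Der_of_worlds. intros u Hu.
    apply H; [intros f Hf; apply Hu; left; exact Hf|apply Hu; right; reflexivity].
  - intros H u Htu Ha. exact (theory_mp ICK u (wprime u) a b (Htu _ H) Ha).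
Qed.

Lemma world_Cond (t : world) a b :
  (forall u : world, wR (fun s : world => s a) t u -> u b) <-> t (Cond a b).
Proof.
  split.
  - intros H. apply (cond_section_closed t (wprime t)), Der_of_worlds.
    intros u Hu. apply H. exists a; split; [reflexivity|exact Hu].
  - intros H u [p [Hp Hq]]. apply Hq.
    assert (Hap : ICK (Iff a p))
      by (apply ICK_and_intro; apply ICK_Imp_of_worlds; intros s; apply Hp).
    apply (ICK_congL _ _ b), ICK_Iff_l in Hap.
    exact (theory_L_mp ICK t (wprime t) _ _ Hap H).
Qed.

Lemma truth_lemma f (t : world) : sat canonical_frame canonical_val t f <-> t f.
Proof.
  revert t.
  induction f as [n| |a IHa b IHb|a IHa b IHb|a IHa b IHb|a IHa b IHb]; intros t; simpl.
  - reflexivity.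
  - split; [intros []|exact (pt_consistent _ _ (wprime t))].
  - rewrite IHa, IHb. symmetry; exact (theory_And ICK ICK_ipc t (wprime t) a b).
  - rewrite IHa, IHb. symmetry; exact (theory_Or ICK ICK_ipc t (wprime t) a b).
  - rewrite <- world_Imp.
    split; intros H u Htu Ha; apply IHb, H, IHa; assumption.
  - rewrite <- world_Cond.
    split; intros H u Htu; apply IHb, H; refine (proj1 (wR_ext _ _ _ t u) Htu);
      intros s; rewrite IHa; reflexivity.
Qed.

Theorem ICK_complete f : cvalid f -> ICK f.
Proof.
  intros H. apply (Der_no_hyps ICK ICK_mp), Der_of_worlds. intros t _.
  apply truth_lemma, H.
  intros n s u Hsu Hs. exact (Hsu _ Hs).
Qed.

Theorem theorem4p26 : forall f : form, ICK f <-> cvalid f.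
Proof.
  intros f; split; [apply ICK_sound|apply ICK_complete].
Qed.
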